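(* For every environment $\mu$, $$\sum_{a\in Z(\mu)}\beta(a)=|\mathcal A|.$$
   Context: Game tree: $V$ is the node set of a finite rooted tree with root $r$ and leaf set $L$; $C(v)$ denotes the set of children of $v$ and $p(v)$ the parent of $v\ne r$. The internal nodes are partitioned into infosets $N$ and actions $\mathcal A$ with $r\in N$, $C(v)\subseteq\mathcal A$ and $|C(v)|>1$ for $v\in N$, and $C(a)\subseteq N\cup L$ for $a\in\mathcal A$. An environment is a map $\mu:\mathcal A\to V$ with $\mu(a)\in C(a)$ for all $a$. For an environment $\mu$, $V(\mu)$ is the smallest subset of $V$ containing $r$, containing $C(v)$ for each $v\in N\cap V(\mu)$, and containing $\mu(a)$ for each $a\in\mathcal A\cap V(\mu)$. $Z(\mu)$ is the set of all $a\in\mathcal A\cap V(\mu)$ with $\mu(a)\in L$. Define $m:N\cup\mathcal A\to\mathbb N$ recursively from the bottom by $m(a)=1+\sum_{v\in C(a)\cap N}m(v)$ for $a\in\mathcal A$ and $m(v)=\sum_{a\in C(v)}m(a)$ for $v\in N$. Define $\beta$ from the top by $\beta(r)=1$, $\beta(a)=m(a)\beta(p(a))$ for $a\in\mathcal A$, $\beta(v)=\beta(p(v))/m(v)$ for $v\in N\setminus\{r\}$. *)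

From mathcomp Require Import all_boot all_order all_algebra.
Set Implicit Arguments. Unset Strict Implicit. Unset Printing Implicit Defensive.
Import GRing.Theory Num.Theory.
Local Open Scope ring_scope.

(* A finite rooted tree on the finite node type V, given by its root r and a
   parent function par (with par r = r, and every node reaching r by iterating
   par).  isAct marks the action nodes; infosets are the internal non-action
   nodes, leaves are the nodes without children. *)
Section GameTree.
Variables (V : finType) (r : V) (par : V -> V) (isAct : pred V).

Definition children (v : V) : {set V} := [set w | (w != r) && (par w == v)].
Definition leaf (v : V) : bool := children v == set0.
Definition internal (v : V) : bool := children v != set0.
Definition infoset (v : V) : bool := internal v && ~~ isAct v.
Definition actions : {set V} := [set a | isAct a].

Definition is_game_tree : Prop :=
  [/\ par r = r,
      (forall v : V, exists k, iter k par v = r),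
      infoset r,
      (forall a, isAct a -> internal a) &
      (forall v, infoset v -> (children v \subset actions) /\ (1 < #|children v|)%N)] /\
  (forall a, isAct a -> forall w, w \in children a -> ~~ isAct w).

Definition is_env (mu : V -> V) : Prop :=
  forall a, isAct a -> mu a \in children a.

Definition env_closed (mu : V -> V) (S : {set V}) : bool :=
  [&& r \in S,
      [forall v, ((v \in S) && infoset v) ==> (children v \subset S)] &
      [forall a, ((a \in S) && isAct a) ==> (mu a \in S)]].

Definition Vmu (mu : V -> V) : {set V} := \bigcap_(S | env_closed mu S) S.

Definition Zmu (mu : V -> V) : {set V} :=
  [set a in Vmu mu | isAct a && leaf (mu a)].

(* m, defined by recursion from the bottom (fuel #|V| exceeds every height) *)
Fixpoint m_aux (k : nat) (v : V) : nat :=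
  match k with
  | 0 => 0
  | k'.+1 =>
      if isAct v then (1 + \sum_(w in children v | infoset w) m_aux k' w)%N
      else (\sum_(w in children v) m_aux k' w)%N
  end.
Definition m (v : V) : nat := m_aux #|V| v.

(* beta, defined by recursion from the top (fuel #|V| exceeds every depth) *)
Fixpoint beta_aux (k : nat) (v : V) : rat :=
  match k with
  | 0 => 1
  | k'.+1 =>
      if v == r then 1
      else if isAct v then (m v)%:R * beta_aux k' (par v)
      else beta_aux k' (par v) / (m v)%:R
  end.
Definition beta (v : V) : rat := beta_aux #|V| v.

End GameTree.

From mathcomp Require Import all_boot all_order all_algebra zify.
Import GRing.Theory Num.Theory.
Local Open Scope ring_scope.

(* Give an action a the weight beta a and an infoset v the weight
   beta v * m v.  An infoset hands its weight on exactly to its children,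
   because m v is the sum of the m a and beta a = m a * beta v; an action a
   hands its weight on to mu a whenever mu a is an infoset, because
   beta (mu a) = beta a / m (mu a).  Summing both conservation laws over V(mu),
   the weights of the non-root infosets cancel, so the weight m r of the root
   equals the beta-weight of the actions in Z(mu), those whose move under mu
   ends at a leaf.  The same telescoping applied to m over the whole tree,
   each action contributing its summand 1, gives m r = |A|. *)

Section GameTreeSums.
Set Implicit Arguments. Unset Strict Implicit.
Variables (V : finType) (r : V) (par : V -> V) (isAct : pred V).

Local Notation C := (children r par).
Local Notation infoset := (infoset r par isAct).
Local Notation m_aux := (m_aux r par isAct).
Local Notation m := (m r par isAct).
Local Notation beta_aux := (beta_aux r par isAct).
Local Notation beta := (beta r par isAct).

Lemma in_children v w : (w \in C v) = (w != r) && (par w == v).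
Proof. by rewrite inE. Qed.

Lemma children_par v w : w \in C v -> par w = v.
Proof. by rewrite in_children => /andP[_ /eqP]. Qed.

Lemma children_neq_root v w : w \in C v -> w != r.
Proof. by rewrite in_children => /andP[]. Qed.

Hypothesis reach_root : forall v, exists k, iter k par v = r.

Let exists_iter_root v : exists k, iter k par v == r.
Proof. by have [k hk] := reach_root v; exists k; apply/eqP. Qed.

Definition depth v : nat := ex_minn (exists_iter_root v).

Lemma iter_depth v : iter (depth v) par v = r.
Proof. by rewrite /depth; case: ex_minnP => k /eqP. Qed.

Lemma depth_min v k : iter k par v = r -> (depth v <= k)%N.
Proof.
by move=> hk; rewrite /depth; case: ex_minnP => k' _; apply; apply/eqP.
Qed.

Lemma depth_par v : v != r -> (depth (par v) < depth v)%N.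
Proof.
move=> vr; have d_gt0 : (0 < depth v)%N.
  by rewrite lt0n; apply: contraNneq vr => d0; rewrite -(iter_depth v) d0.
by rewrite -(prednK d_gt0) ltnS depth_min // -iterSr prednK // iter_depth.
Qed.

Lemma depth_children v w : w \in C v -> (depth v < depth w)%N.
Proof.
by move=> hw; rewrite -(children_par hw) depth_par // (children_neq_root hw).
Qed.

(* The iterates [v, par v, ..., r] are pairwise distinct by minimality of the
   depth, hence there are at most #|V| of them. *)
Lemma depth_lt_card v : (depth v < #|V|)%N.
Proof.
pose f (i : 'I_(depth v).+1) := iter i par v.
suff /leq_card : injective f by rewrite card_ord.
have iter_neq i j : (i < j <= depth v)%N -> iter i par v != iter j par v.
  case/andP=> ij jd; apply/eqP => eq_ij.
  have : iter (depth v - j + i) par v = r.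
    by rewrite iterD eq_ij -iterD subnK // iter_depth.
  by move/depth_min; lia.
move=> i j; rewrite /f => eq_ij; apply/val_inj.
case: (ltngtP i j) => // [lt_ij | lt_ji].
- by move: (iter_neq i j); rewrite lt_ij -ltnS ltn_ord eq_ij eqxx => /(_ isT).
- by move: (iter_neq j i); rewrite lt_ji -ltnS ltn_ord eq_ij eqxx => /(_ isT).
Qed.

Lemma m_aux_stable k v : (#|V| - depth v <= k)%N -> m_aux k v = m_aux k.+1 v.
Proof.
elim: k v => [|k IHk] v hk; first by have := depth_lt_card v; lia.
have eq_children w : w \in C v -> m_aux k w = m_aux k.+1 w.
  by move=> hw; apply: IHk; have := depth_children hw; lia.
rewrite [LHS]/= [RHS]/=; case: (isAct v).
  by congr (_ + _)%N; apply: eq_bigr => w /andP[hw _]; apply: eq_children.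
by apply: eq_bigr => w; apply: eq_children.
Qed.

Lemma mE v : m v = if isAct v then (1 + \sum_(w in C v | infoset w) m w)%N
                   else (\sum_(w in C v) m w)%N.
Proof. by rewrite /m m_aux_stable ?leq_subr. Qed.

Lemma beta_aux_stable k v : (depth v < k)%N -> beta_aux k v = beta_aux k.+1 v.
Proof.
elim: k v => [|k IHk] v hk //; rewrite [LHS]/= [RHS]/=.
by case: eqP => // /eqP vr; rewrite IHk //; have := depth_par vr; lia.
Qed.

Lemma beta_root : beta r = 1.
Proof. by rewrite /beta beta_aux_stable ?depth_lt_card //= eqxx. Qed.

Lemma betaE v : v != r ->
  beta v = if isAct v then (m v)%:R * beta (par v) else beta (par v) / (m v)%:R.
Proof.
by move=> vr; rewrite /beta beta_aux_stable ?depth_lt_card //= (negbTE vr).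
Qed.


Hypothesis root_infoset : infoset r.
Hypothesis infoset_children : forall v, infoset v -> C v \subset actions isAct.
Hypothesis action_children :
  forall a, isAct a -> forall w, w \in C a -> ~~ isAct w.

Lemma infoset_notAct v : infoset v -> ~~ isAct v.
Proof. by case/andP. Qed.

Lemma action_neq_root a : isAct a -> a != r.
Proof. by apply: contraTneq => ->; apply: infoset_notAct. Qed.

Lemma internal_par w : w != r -> internal r par (par w).
Proof. by move=> wr; apply/set0Pn; exists w; rewrite in_children wr eqxx. Qed.

Lemma infoset_child_action v w : infoset v -> w \in C v -> isAct w.
Proof. by move=> hv /(subsetP (infoset_children hv)); rewrite inE. Qed.

Lemma infoset_par_action a : isAct a -> infoset (par a).
Proof.
move=> ha; have ar := action_neq_root ha.
rewrite /infoset internal_par //=; apply: contraL ha => hpa.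
by apply: action_children hpa _ _; rewrite in_children ar eqxx.
Qed.

Lemma infoset_par_nonroot v : infoset v -> v != r -> isAct (par v).
Proof.
move=> hv vr; apply: contraNT (infoset_notAct hv) => hpv.
by apply: infoset_child_action (_ : infoset (par v)) _;
  rewrite ?in_children ?vr ?eqxx // /infoset internal_par.
Qed.

Lemma m_infoset v : infoset v -> m v = (\sum_(a in C v) m a)%N.
Proof. by move=> hv; rewrite mE (negbTE (infoset_notAct hv)). Qed.

Lemma m_action a : isAct a -> m a = (1 + \sum_(w in C a | infoset w) m w)%N.
Proof. by move=> ha; rewrite mE ha. Qed.

Lemma m_infoset_gt0 v : infoset v -> (0 < m v)%N.
Proof.
move=> hv; have /set0Pn[a ha] : C v != set0 by case/andP: hv.
by rewrite m_infoset // (bigD1 a) //= m_action ?(infoset_child_action hv ha).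
Qed.

Section Partition.
Variables (R : Type) (idx : R) (op : Monoid.com_law idx).

Lemma big_action_by_parent (P : pred V) (F : V -> R) :
    (forall a, isAct a -> P a = P (par a)) ->
  \big[op/idx]_(a | isAct a && P a) F a =
  \big[op/idx]_(v | infoset v && P v) \big[op/idx]_(a in C v) F a.
Proof.
move=> hP; rewrite (partition_big par (fun v => infoset v && P v)); last first.
  by move=> a /andP[ha hPa]; rewrite infoset_par_action // -hP.
apply: eq_bigr => v /andP[hv hPv]; apply: eq_bigl => a.
apply/idP/idP => [/andP[/andP[ha _] /eqP <-] | ha].
  by rewrite in_children (action_neq_root ha) eqxx.
have aA := infoset_child_action hv ha.
by rewrite aA (hP a aA) (children_par ha) hPv eqxx.
Qed.

Lemma big_nonroot_infoset_by_parent (P : pred V) (F : V -> R) :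
    (forall v, v != r -> P v -> P (par v)) ->
  \big[op/idx]_(v | [&& infoset v, v != r & P v]) F v =
  \big[op/idx]_(a | isAct a && P a)
    \big[op/idx]_(w in C a | infoset w && P w) F w.
Proof.
move=> hP; rewrite (partition_big par (fun a => isAct a && P a)); last first.
  by move=> v /and3P[hv vr hPv]; rewrite infoset_par_nonroot // hP.
apply: eq_bigr => a _; apply: eq_bigl => w; rewrite in_children.
by case: (infoset w); case: (w != r); case: (P w); case: (par w == a).
Qed.

End Partition.

Lemma m_root : m r = #|actions isAct|.
Proof.
pose M := (\sum_(v | [&& infoset v, v != r & predT v]) m v)%N.
have sum_infoset : (\sum_(v | infoset v && predT v) m v = m r + M)%N.
  rewrite (bigD1 r) ?root_infoset //; congr (_ + _)%N.
  by apply: eq_bigl => v /=; rewrite !andbT.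
have sum_action : (\sum_(a | isAct a && predT a) m a = #|actions isAct| + M)%N.
  rewrite /M (big_nonroot_infoset_by_parent _ _ (P := predT)) //.
  rewrite cardsE -sum1_card.
  rewrite [X in (X + _)%N](eq_bigl (fun a => isAct a && predT a)); last first.
    by move=> a /=; rewrite andbT.
  rewrite -big_split /=; apply: eq_bigr => a /andP[ha _].
  by rewrite m_action //; congr (_ + _)%N; apply: eq_bigl => w; rewrite andbT.
apply/eqP; rewrite -(eqn_add2r M) -sum_infoset -sum_action.
rewrite (big_action_by_parent _ _ (P := predT)) //.
by apply/eqP/eq_bigr => v /andP[hv _]; apply: m_infoset.
Qed.

Definition weight x : rat := if isAct x then beta x else beta x * (m x)%:R.

Lemma weight_infoset v : infoset v -> weight v = \sum_(a in C v) weight a.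
Proof.
move=> hv; rewrite /weight (negbTE (infoset_notAct hv)) m_infoset //.
rewrite natr_sum mulr_sumr; apply: eq_bigr => a ha.
have aA := infoset_child_action hv ha.
by rewrite aA (betaE (action_neq_root aA)) aA (children_par ha) mulrC.
Qed.

Variable mu : V -> V.
Hypothesis env_mu : is_env r par isAct mu.

Local Notation Vm := (Vmu r par isAct mu).

Lemma infoset_env a : isAct a -> infoset (mu a) = ~~ leaf r par (mu a).
Proof.
move=> ha; have muA := action_children ha (env_mu ha).
by rewrite /infoset /internal /leaf muA andbT.
Qed.

Lemma weight_env a : isAct a -> infoset (mu a) -> weight (mu a) = weight a.
Proof.
move=> ha hi; have hm := env_mu ha; have muA := negbTE (infoset_notAct hi).
rewrite /weight ha muA (betaE (children_neq_root hm)) muA (children_par hm).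
by rewrite mulfVK // pnatr_eq0 -lt0n m_infoset_gt0.
Qed.

Lemma env_closed_Vmu : env_closed r par isAct mu Vm.
Proof.
apply/and3P; split.
- by apply/bigcapP => S /and3P[].
- apply/forallP => v; apply/implyP => /andP[hv hiv]; apply/subsetP => w hw.
  apply/bigcapP => S hS; case/and3P: (hS) => _ /forallP/(_ v) + _.
  by rewrite (bigcapP hv S hS) hiv => /subsetP; apply.
- apply/forallP => a; apply/implyP => /andP[ha haA]; apply/bigcapP => S hS.
  by case/and3P: (hS) => _ _ /forallP/(_ a); rewrite (bigcapP ha S hS) haA.
Qed.

Lemma Vmu_root : r \in Vm.
Proof. by case/and3P: env_closed_Vmu. Qed.

Lemma Vmu_children v w : v \in Vm -> infoset v -> w \in C v -> w \in Vm.
Proof.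
case/and3P: env_closed_Vmu => _ /forallP/(_ v) + _ hv hiv.
by rewrite hv hiv => /subsetP; apply.
Qed.

Lemma Vmu_env a : a \in Vm -> isAct a -> mu a \in Vm.
Proof.
by case/and3P: env_closed_Vmu => _ _ /forallP/(_ a) + ha haA; rewrite ha haA.
Qed.

Lemma Vmu_par x : x \in Vm -> x != r ->
  (par x \in Vm) && (isAct (par x) ==> (mu (par x) == x)).
Proof.
move=> hx xr; pose S := [set y in Vm | (y == r) ||
  (par y \in Vm) && (isAct (par y) ==> (mu (par y) == y))].
suff /subsetP/(_ x hx) : Vm \subset S by rewrite inE hx (negbTE xr).
apply: bigcap_inf; apply/and3P; split.
- by rewrite inE Vmu_root eqxx.
- apply/forallP => v; apply/implyP; rewrite inE => /andP[/andP[hv _] hiv].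
  apply/subsetP => w hw; rewrite inE (Vmu_children hv hiv hw) (children_par hw).
  by rewrite hv (negbTE (infoset_notAct hiv)) orbT.
- apply/forallP => a; apply/implyP; rewrite inE => /andP[/andP[hv _] ha].
  by rewrite inE (Vmu_env hv ha) (children_par (env_mu ha)) hv ha eqxx orbT.
Qed.

Lemma Vmu_action_par a : isAct a -> (a \in Vm) = (par a \in Vm).
Proof.
move=> ha; apply/idP/idP => [/Vmu_par/(_ (action_neq_root ha))/andP[] // | hpa].
apply: Vmu_children hpa (infoset_par_action ha) _.
by rewrite in_children action_neq_root ?eqxx.
Qed.

Lemma sum_env_children (R : nmodType) (F : V -> R) a : isAct a -> a \in Vm ->
  \sum_(w in C a | infoset w && (w \in Vm)) F w =
  if infoset (mu a) then F (mu a) else 0.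
Proof.
move=> ha haV; rewrite (eq_bigl (fun w => infoset (mu a) && (w == mu a))).
  by case: (infoset (mu a)); rewrite ?big_pred1_eq ?big_pred0.
move=> w; apply/idP/idP => [/andP[hw /andP[hiw hwV]] | /andP[hi /eqP ->]].
  have [_ /implyP] := andP (Vmu_par hwV (children_neq_root hw)).
  by rewrite (children_par hw) ha => /(_ isT) /eqP ->; rewrite hiw eqxx.
by rewrite env_mu // hi Vmu_env.
Qed.

Lemma sum_Zmu_beta : \sum_(a in Zmu r par isAct mu) beta a = weight r.
Proof.
pose T := \sum_(v | [&& infoset v, v != r & v \in Vm]) weight v.
have sum_infoset : \sum_(v | infoset v && (v \in Vm)) weight v = weight r + T.
  rewrite (bigD1 r) ?root_infoset ?Vmu_root //; congr (_ + _).
  by apply: eq_bigl => v; rewrite andbAC -andbA.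
have sum_Zmu : \sum_(a in Zmu r par isAct mu) beta a =
    \sum_(a | isAct a && (a \in Vm)) (if leaf r par (mu a) then weight a else 0).
  rewrite big_mkcond [RHS]big_mkcond; apply: eq_bigr => a _.
  by rewrite inE /weight; case: (isAct a); case: (a \in Vm); case: leaf.
have sum_nonroot : T =
    \sum_(a | isAct a && (a \in Vm)) (if leaf r par (mu a) then 0 else weight a).
  rewrite /T big_nonroot_infoset_by_parent => [|v vr /Vmu_par/(_ vr)/andP[] //].
  apply: eq_bigr => a /andP[ha haV]; rewrite sum_env_children // infoset_env //.
  by case nonleaf: leaf => //=; rewrite weight_env // infoset_env // nonleaf.
apply: (addIr T); rewrite -sum_infoset sum_Zmu {1}sum_nonroot -big_split /=.
rewrite (big_action_by_parent _ _ (P := fun v => v \in Vm)); last first.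
  exact: Vmu_action_par.
apply: eq_bigr => v /andP[hv _]; rewrite weight_infoset //.
by apply: eq_bigr => a _; case: leaf; rewrite ?addr0 ?add0r.
Qed.

Lemma weight_root : weight r = #|actions isAct|%:R.
Proof.
by rewrite /weight (negbTE (infoset_notAct root_infoset)) beta_root m_root mul1r.
Qed.

End GameTreeSums.

Theorem mainTheorem5 (V : finType) (r : V) (par : V -> V) (isAct : pred V)
    (mu : V -> V) :
  is_game_tree r par isAct ->
  is_env r par isAct mu ->
  \sum_(a in Zmu r par isAct mu) beta r par isAct a = #|actions isAct|%:R.
Proof.
move=> [[_ reach root_inf _ inf_ch] act_ch] env.
have inf_act v : infoset r par isAct v -> children r par v \subset actions isAct.
  by move=> /inf_ch[].
rewrite (sum_Zmu_beta reach root_inf inf_act act_ch env).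
exact: weight_root reach root_inf inf_act act_ch.
Qed.
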